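(* Let $\mathbf{H}_{\mathrm{SC}}$, $L_2$, $d$, the MD mapping $M$ and the matrix $\mathbf{H}^{\mathrm{MD}}_{\mathrm{SC}}$ be as in the context. Let $e_1,e_2,\dots,e_k$ be the edges, listed in traversal order, of a cycle of length $k$ in the Tanner graph of $\mathbf{H}_{\mathrm{SC}}$, labeled so that $e_u$ and $e_{u+1}$ share a check node (row) when $u$ is odd and share a variable node (column) when $u$ is even, where indices are taken cyclically ($e_{k+1}=e_1$). Define $$\Delta=\Big(-\sum_{u=1}^{k}(-1)^u M(e_u)\Big) \bmod L_2\in\{0,\dots,L_2-1\},\qquad \tau=\gcd(L_2,\Delta),$$ with the convention $\gcd(L_2,0)=L_2$. Then the subgraph of the Tanner graph of $\mathbf{H}^{\mathrm{MD}}_{\mathrm{SC}}$ formed by the $L_2k$ lifted edges $e_u^{(a)}$, $1\le u\le k$, $a\in\mathbb{Z}_{L_2}$, together with their endpoints, is a vertex-disjoint union of exactly $\tau$ cycles, each of length $L_2k/\tau$.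
   Context: $\mathbf{H}_{\mathrm{SC}}$ is a binary matrix partitioned into $z\times z$ blocks called circulants; each block is either the zero matrix or a cyclic shift of the $z\times z$ identity matrix (a nonzero circulant). Its Tanner graph has one variable node per column, one check node per row, and an edge $(r,c)$ for each entry $\mathbf{H}_{\mathrm{SC}}(r,c)=1$; each edge lies in exactly one nonzero circulant. Fix integers $1\le d\le L_2$. An MD mapping $M$ assigns to each nonzero circulant an integer in $\{0,1,\dots,d-1\}$; for an edge $e$ write $M(e)$ for the value of $M$ on the circulant containing $e$. (Equivalently, $\mathbf{H}_{\mathrm{SC}}=\mathbf{H}'_{\mathrm{SC}}+\sum_{t=1}^{d-1}\mathbf{A}_t$, where $\mathbf{A}_t$ keeps exactly the circulants with $M=t$ and $\mathbf{H}'_{\mathrm{SC}}$ those with $M=0$.) The MD-SC matrix $\mathbf{H}^{\mathrm{MD}}_{\mathrm{SC}}$ is the $L_2\times L_2$ block matrix whose block (segment) $\mathbf{S}_{a,b}$, $a,b\in\mathbb{Z}_{L_2}$, equals $\mathbf{H}'_{\mathrm{SC}}$ if $a=b$, equals $\mathbf{A}_t$ if $a-b\equiv t \pmod{L_2}$ with $1\le t\le d-1$, and is zero otherwise. Thus its rows are indexed by pairs $(a,r)$ and columns by pairs $(b,c)$, and the entry at $((a,r),(b,c))$ is $1$ iff $\mathbf{H}_{\mathrm{SC}}(r,c)=1$ and $a-b\equiv M((r,c))\pmod{L_2}$. For an edge $e=(r,c)$ of $\mathbf{H}_{\mathrm{SC}}$ and $a\in\mathbb{Z}_{L_2}$, its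 lifted edge $e^{(a)}$ is the edge of the Tanner graph of $\mathbf{H}^{\mathrm{MD}}_{\mathrm{SC}}$ joining variable node $(a,c)$ and check node $((a+M(e))\bmod L_2, r)$. A cycle of length $k$ in a Tanner graph is a closed path with $k$ distinct edges and no repeated vertices. *)

From HB Require Import structures.
From mathcomp Require Import all_boot all_order all_algebra.
Set Implicit Arguments. Unset Strict Implicit. Unset Printing Implicit Defensive.

(* An edge is a pair (r, c) : R * C joining check node r and variable node c.
   Nodes are of type R + C : inl r = check node r, inr c = variable node c. *)
Definition incident (R C : Type) (e : R * C) (x : R + C) : Prop :=
  x = inl e.1 \/ x = inr e.2.

Definition is_cycle (R C : finType) (E : {set R * C}) (k : nat)
  (e : 'I_k -> R * C) : Prop :=
  1 < k /\ injective e /\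
  exists v : 'I_k -> (R + C)%type, injective v /\
    forall i : 'I_k, e i \in E /\ incident (e i) (v i) /\ incident (e i) (v (ordS i)).

Definition tanner (R C : finType) (H : R -> C -> bool) : {set R * C} :=
  [set p | H p.1 p.2].

(* H is partitioned into z x z blocks; each block is zero or a cyclic shift of
   the z x z identity matrix. *)
Definition circulant_blocks (m n z : nat) (H : 'M[bool]_(m, n)) : Prop :=
  forall i j : nat,
    (forall (r : 'I_m) (c : 'I_n), r %/ z = i -> c %/ z = j -> H r c = false) \/
    (exists s : nat, forall (r : 'I_m) (c : 'I_n), r %/ z = i -> c %/ z = j ->
        H r c = (c %% z == (r %% z + s) %% z)).

(* value of the MD mapping M (given on block indices) on an edge *)
Definition Medge (m n z : nat) (M : nat -> nat -> nat) (e : 'I_m * 'I_n) : nat :=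
  M (e.1 %/ z) (e.2 %/ z).

Definition HMD (m n z L2 : nat) (H : 'M[bool]_(m, n)) (M : nat -> nat -> nat)
  (x : 'I_L2 * 'I_m) (y : 'I_L2 * 'I_n) : bool :=
  H x.2 y.2 && (nat_of_ord x.1 == y.1 + Medge z M (x.2, y.2) %[mod L2]).

Definition modL (L : nat) (hL : 0 < L) (x : nat) : 'I_L := Ordinal (ltn_pmod x hL).

Definition lifted_edge (m n z L2 : nat) (hL : 0 < L2) (M : nat -> nat -> nat)
  (e : 'I_m * 'I_n) (a : 'I_L2) : ('I_L2 * 'I_m) * ('I_L2 * 'I_n) :=
  ((modL hL (a + Medge z M e), e.1), (a, e.2)).

(* Delta = (- sum_{u=1}^k (-1)^u M(e_u)) mod L2, with e_u = e (u-1) *)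
Definition Delta (m n z L2 k : nat) (M : nat -> nat -> nat)
  (e : 'I_k -> 'I_m * 'I_n) : nat :=
  absz ((- \sum_(i < k) (-1) ^+ i.+1 * (Medge z M (e i))%:Z) %% (L2 : int))%Z.

Definition disjoint_union_of_cycles (R C : finType) (S : {set R * C}) (t l : nat) : Prop :=
  exists P : {set {set R * C}},
    partition P S /\ #|P| = t /\
    (forall B, B \in P -> exists f : 'I_l -> R * C,
        is_cycle S f /\ B = [set f i | i : 'I_l]) /\
    (forall B1 B2, B1 \in P -> B2 \in P -> B1 != B2 ->
        forall x y, x \in B1 -> y \in B2 -> x.1 != y.1 /\ x.2 != y.2).

From HB Require Import structures.
From mathcomp Require Import all_boot all_order all_algebra.
From mathcomp Require Import zify ring.
Set Implicit Arguments. Unset Strict Implicit. Unset Printing Implicit Defensive.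
Import GRing.Theory Num.Theory.

(* Index the cycle edges from 0, so that e_j, e_{j+1} share a row for even j
   and a column for odd j, and read j modulo k to go around the cycle again
   and again.  Following lifted edges, passing a shared check node after an
   even j changes the layer by M(e_j) - M(e_{j+1}), passing a shared variable
   node keeps it, and a full turn moves it by Delta (mod L2).  So the walk
   started on layer a uses at step j the layer a + (j / k) Delta + s(j mod k),
   s being the partial shift, and closes after L2/tau turns, i.e. after
   len = (L2/tau) k edges. *)

Section AlternatingCycle.
Variables (R C : finType) (k : nat) (e : 'I_k -> R * C) (v : 'I_k -> (R + C)%type).
Hypothesis k_gt1 : 1 < k.
Hypothesis e_inj : injective e.
Hypothesis v_inj : injective v.
Hypothesis e_v : forall i, incident (e i) (v i) /\ incident (e i) (v (ordS i)).
Hypothesis e_lab : forall i : 'I_k,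
  if odd i then (e i).2 = (e (ordS i)).2 else (e i).1 = (e (ordS i)).1.

Lemma ordS_neq (i : 'I_k) : ordS i != i.
Proof.
apply/eqP => /(congr1 val) /=; case: i => i /= hi.
have [hlt|heq] : i.+1 < k \/ i.+1 = k by lia.
  by rewrite modn_small //; lia.
by rewrite heq modnn; lia.
Qed.

Lemma vertex_succ (i : 'I_k) :
  v (ordS i) = if odd i then inr (e i).2 else inl (e i).1.
Proof.
have := e_lab i; have [_ h1] := e_v i; have [h2 _] := e_v (ordS i).
have hne : e i <> e (ordS i).
  by move/e_inj/eqP; rewrite eq_sym (negbTE (ordS_neq i)).
have same_edge : (e i).1 = (e (ordS i)).1 -> (e i).2 = (e (ordS i)).2 -> False.
  by move=> h h'; apply: hne; rewrite [e i]surjective_pairing h h' -surjective_pairing.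
by case: (odd i) => hl; case: h1 => // h1; case: h2; rewrite h1 //;
  case=> h; exfalso; apply: same_edge.
Qed.

Lemma vertex_at (i : 'I_k) : v i = if odd i then inl (e i).1 else inr (e i).2.
Proof.
have [h1 _] := e_v i; have := vertex_succ i.
have hne : v i <> v (ordS i).
  by move/v_inj/eqP; rewrite eq_sym (negbTE (ordS_neq i)).
by case: (odd i) => hv; rewrite hv in hne; case: h1 => // h1; rewrite h1 in hne.
Qed.

(* The labelling alternates around the cycle, so its length is even. *)
Lemma cycle_length_even : ~~ odd k.
Proof.
apply/negP => ok.
have hk1 : k.-1 < k by lia.
pose j := Ordinal hk1; pose o0 := Ordinal (ltnW k_gt1); pose o1 := Ordinal k_gt1.
have ej : ~~ odd j by rewrite /= -subn1 oddB ?ok //; lia.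
have hS : ordS j = o0 by apply: val_inj => /=; rewrite prednK ?modnn //; lia.
have h0 : ordS o0 = o1 by apply: val_inj => /=; rewrite modn_small.
have := vertex_succ j; rewrite (negbTE ej) hS.
have := vertex_succ o0; rewrite /= h0.
have := e_lab j; rewrite (negbTE ej) hS => -> <- /v_inj /(congr1 val) //.
Qed.

Lemma row_vertex (i : 'I_k) : inl (e i).1 = v (if odd i then i else ordS i).
Proof. by case oi: (odd i); [rewrite vertex_at oi | rewrite vertex_succ oi]. Qed.

Lemma col_vertex (i : 'I_k) : inr (e i).2 = v (if odd i then ordS i else i).
Proof. by case oi: (odd i); [rewrite vertex_succ oi | rewrite vertex_at oi]. Qed.

Lemma shared_row (i i' : 'I_k) : (e i).1 = (e i').1 ->
  i = i' \/ (i' = ordS i /\ ~~ odd i) \/ (i = ordS i' /\ ~~ odd i').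
Proof.
move=> h; have : inl (e i).1 = inl (e i').1 :> (R + C)%type by rewrite h.
rewrite !row_vertex => /v_inj.
by case oi: (odd i); case oi': (odd i') => h'; auto; left; apply: ordS_inj.
Qed.

Lemma shared_col (i i' : 'I_k) : (e i).2 = (e i').2 ->
  i = i' \/ (i' = ordS i /\ odd i) \/ (i = ordS i' /\ odd i').
Proof.
move=> h; have : inr (e i).2 = inr (e i').2 :> (R + C)%type by rewrite h.
rewrite !col_vertex => /v_inj.
by case oi: (odd i); case oi': (odd i') => h'; auto; left; apply: ordS_inj.
Qed.

End AlternatingCycle.

Lemma dvdn_mul_lt_period (L D q : nat) :
  0 < L -> L %| q * D -> q < L %/ gcdn L D -> q = 0.
Proof.
move=> hL hdv hq.
have ht : 0 < gcdn L D by rewrite gcdn_gt0 hL.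
have hqt : L %| q * gcdn L D by rewrite muln_gcdr dvdn_gcd hdv dvdn_mull.
move: hqt; rewrite -{1}(divnK (dvdn_gcdl L D)) dvdn_pmul2r // => hdvq.
case: q hdv hq hdvq => // q _ hq /(dvdn_leq (isT : 0 < q.+1)); lia.
Qed.

Lemma dvdz_natP (d x y : nat) : (d%:Z %| (x%:Z - y%:Z)%R)%Z <-> x %% d = y %% d.
Proof. by rewrite -eqz_mod_dvd !modz_nat; split => [/eqP[]|->]. Qed.

Lemma dvdz_sub_eq (d A B X : int) :
  (d %| A)%Z -> (d %| B)%Z -> X = (A - B)%R -> (d %| X)%Z.
Proof. by move=> hA hB ->; rewrite rpredB. Qed.

Lemma dvdz_addsub_eq (d A B C X : int) :
  (d %| A)%Z -> (d %| B)%Z -> (d %| C)%Z -> X = (A + B - C)%R -> (d %| X)%Z.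
Proof. by move=> hA hB hC ->; rewrite rpredB ?rpredD. Qed.

Section LiftedWalk.
Variables (m n z L2 : nat) (L2_gt0 : 0 < L2) (M : nat -> nat -> nat) (k : nat).
Variable e : 'I_k -> 'I_m * 'I_n.
Hypothesis k_gt1 : 1 < k.
Hypothesis k_even : ~~ odd k.

Let k_gt0 : 0 < k := ltnW k_gt1.

Definition edge_at (j : nat) : 'I_m * 'I_n := e (modL k_gt0 j).
Definition M_at (j : nat) : nat := Medge z M (edge_at j).

(* Layer shift accumulated over the first t steps: crossing a shared check
   node after an even-indexed edge e_u moves the layer by M(e_u) - M(e_{u+1}). *)
Definition shift (t : nat) : int :=
  \sum_(u < t) (if odd u then 0 else (M_at u)%:Z - (M_at u.+1)%:Z)%R.

Definition delta : nat := Delta z L2 M e.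
Definition tau : nat := gcdn L2 delta.
(* number of turns around the base cycle before the walk closes up *)
Definition turns : nat := L2 %/ tau.
Definition len : nat := turns * k.

Definition layer (a j : nat) : int :=
  (a%:Z + (j %/ k)%:Z * delta%:Z + shift (j %% k))%R.

Lemma edge_at_mod j : edge_at (j %% k) = edge_at j.
Proof. by rewrite /edge_at; congr e; apply: val_inj; rewrite /= modn_mod. Qed.

Lemma edge_at_ord (i : 'I_k) : edge_at i = e i.
Proof. by rewrite /edge_at; congr e; apply: val_inj; rewrite /= modn_small. Qed.

Lemma M_at_mod j : M_at (j %% k) = M_at j.
Proof. by rewrite /M_at edge_at_mod. Qed.

Lemma odd_mod_k j : odd (j %% k) = odd j.
Proof. by rewrite {2}(divn_eq j k) oddD oddM (negbTE k_even) andbF. Qed.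

Lemma shift_double (t : nat) :
  shift t.*2 = (\sum_(u < t.*2) (-1) ^+ u * (M_at u)%:Z)%R.
Proof.
elim: t => [|t IH]; first by rewrite /shift !big_ord0.
rewrite doubleS /shift !big_ord_recr /= -/(shift _) IH /= odd_double /=.
have sign_even : ((-1) ^+ t.*2 = 1 :> int)%R.
  by rewrite -mul2n exprM expr2 mulN1r opprK expr1n.
by rewrite exprS sign_even; ring.
Qed.

Lemma delta_shift : (delta%:Z = shift k %% L2%:Z)%Z.
Proof.
have hk2 : k = k./2.*2.
  by have := odd_double_half k; rewrite (negbTE k_even) add0n.
have -> : shift k = (\sum_(i < k) (-1) ^+ i * (Medge z M (e i))%:Z)%R.
  by rewrite {1}hk2 shift_double -hk2; apply: eq_bigr => i _; rewrite /M_at edge_at_ord.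
rewrite /delta /Delta -sumrN.
under eq_bigr => i _ do rewrite exprS mulN1r mulNr opprK.
by rewrite gez0_abs // modz_ge0 //; lia.
Qed.

Lemma shift_pred_k : shift k.-1 = shift k.
Proof.
have ok : odd k.-1 by move: k_even k_gt1; case: k => //= k' /negPn.
by rewrite /shift; case: k k_gt1 ok => // k' _ /= ok; rewrite big_ord_recr /= ok addr0.
Qed.

Lemma shift_succ r :
  shift r.+1 = (shift r + (if odd r then 0 else (M_at r)%:Z - (M_at r.+1)%:Z))%R.
Proof. by rewrite /shift big_ord_recr. Qed.

Lemma layer_step a j : (L2%:Z %| (layer a j.+1 - layer a j -
  (if odd j then 0 else (M_at j)%:Z - (M_at j.+1)%:Z))%R)%Z.
Proof.
have hr := ltn_pmod j k_gt0.
rewrite /layer modnS divnS //.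
case: ifP => hdv.
  have hr1 : (j %% k).+1 = k.
    have : k %| (j %% k).+1.
      by move: hdv; rewrite {1}(divn_eq j k) -addnS dvdn_addr // dvdn_mull.
    by move/dvdn_leq => /(_ isT); lia.
  have hr2 : j %% k = k.-1 by lia.
  have oj : odd j.
    by rewrite -odd_mod_k hr2; move: k_even k_gt1; case: k => //= k' /negPn.
  rewrite oj hr2 shift_pred_k /shift big_ord0 /= -/(shift k).
  have -> : (((1 + j %/ k)%N)%:Z * delta%:Z = delta%:Z + (j %/ k)%:Z * delta%:Z)%R.
    by rewrite PoszD; ring.
  rewrite (_ : (_ - _ - 0 = delta%:Z - shift k)%R); last by ring.
  by rewrite -eqz_mod_dvd delta_shift modz_mod.
have hlt : (j %% k).+1 < k.
  case: (ltngtP (j %% k).+1 k) => // h; first by lia.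
  by move: hdv; rewrite {1}(divn_eq j k) -addnS h dvdn_addr ?dvdn_mull // dvdnn.
have -> : M_at j.+1 = M_at (j %% k).+1 by rewrite -[LHS]M_at_mod modnS hdv.
by rewrite add0n shift_succ odd_mod_k M_at_mod (_ : (_ - _ - _)%R = 0%R) ?dvdz0 //; ring.
Qed.

Lemma tau_gt0 : 0 < tau. Proof. by rewrite gcdn_gt0 L2_gt0. Qed.

Lemma tau_dvdL : tau %| L2. Proof. exact: dvdn_gcdl. Qed.

Lemma turns_gt0 : 0 < turns.
Proof. by rewrite divn_gt0 ?tau_gt0 // dvdn_leq // tau_dvdL. Qed.

Lemma len_gt1 : 1 < len.
Proof. by have := turns_gt0; rewrite /len; nia. Qed.

Lemma len_even : ~~ odd len.
Proof. by rewrite /len oddM (negbTE k_even) andbF. Qed.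

Lemma len_eq : L2 * k %/ tau = len.
Proof. by rewrite /len /turns divn_mulAC // tau_dvdL. Qed.

Lemma odd_mod_len j : odd (j %% len) = odd j.
Proof. by rewrite {2}(divn_eq j len) oddD oddM (negbTE len_even) andbF. Qed.

Lemma layer_period a j : (L2%:Z %| (layer a (j + len) - layer a j)%R)%Z.
Proof.
rewrite /layer /len addnC divnMDl // modnMDl.
rewrite (_ : (_ - _)%R = Posz (turns * delta)); last by rewrite PoszD PoszM; ring.
suff : L2 %| turns * delta by [].
by rewrite /turns /tau mulnC -muln_divCA_gcd dvdn_mulr.
Qed.

Lemma dvdz_tau x : (L2%:Z %| x)%Z -> (tau%:Z %| x)%Z.
Proof. exact/dvdz_trans/tau_dvdL. Qed.

Lemma tau_dvd_shift : (tau%:Z %| shift k)%Z.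
Proof.
rewrite (_ : shift k = (shift k - delta%:Z) + delta%:Z)%R; last by ring.
apply: rpredD; last exact: (dvdn_gcdr L2 delta).
by apply: dvdz_tau; rewrite -eqz_mod_dvd delta_shift modz_mod.
Qed.

Definition slot (a j : nat) : nat := absz (layer a j %% L2%:Z)%Z.
Definition walk (a j : nat) := lifted_edge z L2_gt0 M (edge_at j) (modL L2_gt0 (slot a j)).

Lemma slotE a j : Posz (slot a j) = (layer a j %% L2%:Z)%Z.
Proof. by rewrite /slot gez0_abs // modz_ge0 //; lia. Qed.

Lemma slot_lt a j : slot a j < L2.
Proof.
have : (Posz (slot a j) < Posz L2)%R by rewrite slotE ltz_pmod //; lia.
by rewrite ltz_nat.
Qed.

Lemma slot_layer a j : (L2%:Z %| ((slot a j)%:Z - layer a j)%R)%Z.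
Proof. by rewrite slotE -eqz_mod_dvd modz_mod. Qed.

Lemma slot_congr a j a' j' :
  (L2%:Z %| (layer a j - layer a' j')%R)%Z -> slot a j = slot a' j'.
Proof.
move=> h; rewrite -(modn_small (slot_lt a j)) -(modn_small (slot_lt a' j')).
apply/(dvdz_natP L2).
by apply: (dvdz_addsub_eq h (slot_layer a j) (slot_layer a' j')); ring.
Qed.

Lemma walk_col a j a' j' : (walk a j).2 = (walk a' j').2 <->
  (edge_at j).2 = (edge_at j').2 /\ (L2%:Z %| (layer a j - layer a' j')%R)%Z.
Proof.
split => [[h1 h2]|[h1 h2]].
  split => //; move: h1; rewrite !modn_small ?slot_lt // => hb.
  by apply: (dvdz_sub_eq (slot_layer a' j') (slot_layer a j)); rewrite hb; ring.
rewrite /walk /lifted_edge /= h1; congr pair.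
by apply: val_inj; rewrite /= (slot_congr h2).
Qed.

Lemma walk_row a j a' j' : (walk a j).1 = (walk a' j').1 <->
  (edge_at j).1 = (edge_at j').1 /\
  (L2%:Z %| ((layer a j + (M_at j)%:Z) - (layer a' j' + (M_at j')%:Z))%R)%Z.
Proof.
split => [[h1 h2]|[h1 h2]].
  split => //; move: h1; rewrite !(modn_small (slot_lt _ _)) => /(dvdz_natP L2).
  rewrite !PoszD => hc.
  by apply: (dvdz_addsub_eq hc (slot_layer a' j') (slot_layer a j)); rewrite /M_at /Medge; ring.
rewrite /walk /lifted_edge /= h1; congr pair.
apply: val_inj => /=; rewrite !(modn_small (slot_lt _ _)).
apply/(dvdz_natP L2); rewrite !PoszD.
by apply: (dvdz_addsub_eq h2 (slot_layer a j) (slot_layer a' j')); rewrite /M_at /Medge; ring.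
Qed.

Lemma walk_eq a j a' j' : walk a j = walk a' j' ->
  edge_at j = edge_at j' /\ (L2%:Z %| (layer a j - layer a' j')%R)%Z.
Proof.
move=> h; have [h1 h2] := (walk_col a j a' j').1 (congr1 snd h).
have [h3 _] := (walk_row a j a' j').1 (congr1 fst h).
by rewrite [edge_at j]surjective_pairing [edge_at j']surjective_pairing h1 h3.
Qed.

Lemma walk_period a j : walk a (j + len) = walk a j.
Proof.
have edge_period : edge_at (j + len) = edge_at j.
  by rewrite -edge_at_mod -[RHS]edge_at_mod /len addnC modnMDl.
rewrite /walk edge_period; congr (lifted_edge _ _ _ _ _); apply: val_inj => /=.
by rewrite (@slot_congr a (j + len) a j) // layer_period.
Qed.

Lemma walk_mod_len a j : walk a (j %% len) = walk a j.
Proof.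
rewrite {2}(divn_eq j len) addnC; elim: (j %/ len) => [|q IH]; first by rewrite mul0n addn0.
by rewrite mulSn addnA [_ + len]addnC -addnA addnC walk_period.
Qed.

(* Within one period, walk edges with the same base edge have distinct
   layers: the layers of successive turns differ by multiples of Delta. *)
Lemma walk_same_edge a j j' : j < len -> j' < len -> j %% k = j' %% k ->
  (L2%:Z %| (layer a j - layer a j')%R)%Z -> j = j'.
Proof.
move=> hj hj' hm h.
have hp : j %/ k < turns by rewrite ltn_divLR.
have hp' : j' %/ k < turns by rewrite ltn_divLR.
have : (L2%:Z %| (((j %/ k)%:Z - (j' %/ k)%:Z) * delta%:Z)%R)%Z.
  by rewrite (_ : (_ * _ = layer a j - layer a j')%R) // /layer hm; ring.
rewrite dvdzE abszM /= => /(dvdn_mul_lt_period L2_gt0) dist0.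
have hq : j %/ k = j' %/ k.
  apply/eqP; rewrite -distn_eq0; apply/eqP/dist0.
  case: (leqP (j %/ k) (j' %/ k)) => hle.
    by rewrite distnEr //; apply: leq_ltn_trans (leq_subr _ _) hp'.
  by rewrite distnEl ?(ltnW hle) //; apply: leq_ltn_trans (leq_subr _ _) hp.
by rewrite (divn_eq j k) (divn_eq j' k) hq hm.
Qed.

Hypothesis e_inj : injective e.
Hypothesis e_lab : forall i : 'I_k,
  if odd i then (e i).2 = (e (ordS i)).2 else (e i).1 = (e (ordS i)).1.
Hypothesis e_row : forall i i' : 'I_k, (e i).1 = (e i').1 ->
  i = i' \/ (i' = ordS i /\ ~~ odd i) \/ (i = ordS i' /\ ~~ odd i').
Hypothesis e_col : forall i i' : 'I_k, (e i).2 = (e i').2 ->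
  i = i' \/ (i' = ordS i /\ odd i) \/ (i = ordS i' /\ odd i').

Definition pos (j : nat) : 'I_k := modL k_gt0 j.

Lemma pos_succ (j : nat) : val (ordS (pos j)) = j.+1 %% k.
Proof. by rewrite /= -addn1 modnDml addn1. Qed.

Lemma edge_at_succ j : e (ordS (pos j)) = edge_at j.+1.
Proof. by rewrite /edge_at; congr e; apply: val_inj; rewrite pos_succ. Qed.

Lemma walk_odd_step a j : odd j -> (walk a j).2 = (walk a j.+1).2.
Proof.
move=> oj; apply/walk_col; split.
  by have := e_lab (pos j); rewrite /= odd_mod_k oj edge_at_succ.
by have := layer_step a j; rewrite oj => h; apply: (dvdz_sub_eq (dvdz0 _) h); ring.
Qed.

Lemma walk_even_step a j : ~~ odd j -> (walk a j).1 = (walk a j.+1).1.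
Proof.
move=> oj; apply/walk_row; split.
  by have := e_lab (pos j); rewrite /= odd_mod_k (negbTE oj) edge_at_succ.
have := layer_step a j; rewrite (negbTE oj) => h.
by apply: (dvdz_sub_eq (dvdz0 _) h); ring.
Qed.

(* The invariant of the walk: its offset is congruent to a modulo tau. *)
Definition offset (a j : nat) : int := (layer a j - shift (j %% k))%R.

Lemma offset_tau_eq a a' j j' : a < tau -> a' < tau ->
  (tau%:Z %| (offset a j - offset a' j')%R)%Z -> a = a'.
Proof.
move=> ha ha' h.
have offset_a b i : (tau%:Z %| (offset b i - b%:Z)%R)%Z.
  rewrite /offset /layer (_ : (_ - _ - _)%R = (i %/ k)%:Z * delta%:Z)%R; last by ring.
  exact/dvdz_mull/(dvdn_gcdr L2 delta).
rewrite -(modn_small ha) -(modn_small ha'); apply/(dvdz_natP tau).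
by apply: (dvdz_addsub_eq h (offset_a a' j') (offset_a a j)); ring.
Qed.

Lemma offset_same a j a' j' : j %% k = j' %% k ->
  (L2%:Z %| (layer a j - layer a' j')%R)%Z -> (tau%:Z %| (offset a j - offset a' j')%R)%Z.
Proof.
move=> hm h; apply: dvdz_tau; rewrite /offset hm.
by apply: (dvdz_sub_eq h (dvdz0 _)); ring.
Qed.

Lemma offset_row_step a j a' j' : pos j' = ordS (pos j) -> ~~ odd (pos j) ->
  (L2%:Z %| ((layer a j + (M_at j)%:Z) - (layer a' j' + (M_at j')%:Z))%R)%Z ->
  (tau%:Z %| (offset a j - offset a' j')%R)%Z.
Proof.
move=> /(congr1 val) hS ho h; rewrite pos_succ /= in hS.
have hr : (j %% k).+1 < k.
  have := ltn_pmod j k_gt0.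
  have : (j %% k).+1 != k by apply/eqP => heq; move: k_even; rewrite -heq /= ho.
  lia.
have hj' : j' %% k = (j %% k).+1 by rewrite hS -addn1 -modnDml addn1 modn_small.
apply: dvdz_tau; rewrite /offset hj' shift_succ (negbTE ho) M_at_mod -hj' M_at_mod.
by apply: (dvdz_sub_eq h (dvdz0 _)); ring.
Qed.

Lemma offset_col_step a j a' j' : pos j' = ordS (pos j) -> odd (pos j) ->
  (L2%:Z %| (layer a j - layer a' j')%R)%Z -> (tau%:Z %| (offset a j - offset a' j')%R)%Z.
Proof.
move=> /(congr1 val) hS ho h; rewrite pos_succ /= in hS.
have := ltn_pmod j k_gt0.
case: (ltngtP (j %% k).+1 k) => heq _.
- have hj' : j' %% k = (j %% k).+1 by rewrite hS -addn1 -modnDml addn1 modn_small.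
  apply: dvdz_tau; rewrite /offset hj' shift_succ /= ho.
  by apply: (dvdz_sub_eq h (dvdz0 _)); ring.
- lia.
- have hj' : j' %% k = 0 by rewrite hS -addn1 -modnDml addn1 heq modnn.
  have hj : j %% k = k.-1 by lia.
  rewrite /offset hj' hj shift_pred_k /shift big_ord0 -/(shift k).
  by apply: (dvdz_addsub_eq (dvdz_tau h) (dvdz0 _) tau_dvd_shift); ring.
Qed.

Lemma walk_row_block a j a' j' : a < tau -> a' < tau ->
  (walk a j).1 = (walk a' j').1 -> a = a'.
Proof.
move=> ha ha' /walk_row [hr hc]; apply: (offset_tau_eq (j := j) (j' := j')) => //.
case: (e_row hr) => [hI|[[hS ho]|[hS ho]]].
- apply: offset_same; first by have := congr1 val hI.
  by apply: (dvdz_sub_eq hc (dvdz0 _)); rewrite /M_at /edge_at hI; ring.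
- exact: offset_row_step.
- by rewrite -opprB rpredN; apply: offset_row_step; rewrite // -opprB rpredN.
Qed.

Lemma walk_col_block a j a' j' : a < tau -> a' < tau ->
  (walk a j).2 = (walk a' j').2 -> a = a'.
Proof.
move=> ha ha' /walk_col [hr hc]; apply: (offset_tau_eq (j := j) (j' := j')) => //.
case: (e_col hr) => [hI|[[hS ho]|[hS ho]]].
- by apply: offset_same => //; have := congr1 val hI.
- exact: offset_col_step.
- by rewrite -opprB rpredN; apply: offset_col_step; rewrite // -opprB rpredN.
Qed.

Lemma walk_inj a a' j j' : a < tau -> a' < tau -> j < len -> j' < len ->
  walk a j = walk a' j' -> a = a' /\ j = j'.
Proof.
move=> ha ha' hj hj' h.
have aa' := walk_col_block ha ha' (congr1 snd h); subst a'.
have [hE hc] := walk_eq h.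
have hm : j %% k = j' %% k by have := congr1 val (e_inj hE).
by split => //; apply: (walk_same_edge hj hj' hm hc).
Qed.

Definition walk_vertex (a j : nat) : ('I_L2 * 'I_m) + ('I_L2 * 'I_n) :=
  if odd j then inl (walk a j).1 else inr (walk a j).2.

Lemma walk_vertex_inj a j j' : a < tau -> j < len -> j' < len ->
  walk_vertex a j = walk_vertex a j' -> j = j'.
Proof.
move=> ha hj hj'; rewrite /walk_vertex.
case oj: (odd j); case oj': (odd j') => // h.
- have /walk_row [hr hc] := inl_inj h.
  case: (e_row hr) => [hI|[[_ ho]|[_ ho]]]; last 2 first.
  + by rewrite /= odd_mod_k oj in ho.
  + by rewrite /= odd_mod_k oj' in ho.
  have hm : j %% k = j' %% k by have := congr1 val hI.
  apply: (walk_same_edge hj hj' hm); apply: (dvdz_sub_eq hc (dvdz0 _)).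
  by rewrite -M_at_mod hm M_at_mod; ring.
- have /walk_col [hr hc] := inr_inj h.
  case: (e_col hr) => [hI|[[_ ho]|[_ ho]]]; last 2 first.
  + by rewrite /= odd_mod_k oj in ho.
  + by rewrite /= odd_mod_k oj' in ho.
  have hm : j %% k = j' %% k by have := congr1 val hI.
  exact: (walk_same_edge hj hj' hm hc).
Qed.

Lemma walk_vertex_here a j : incident (walk a j) (walk_vertex a j).
Proof. by rewrite /walk_vertex; case: (odd j); [left|right]. Qed.

Lemma walk_vertex_next a j : incident (walk a j) (walk_vertex a j.+1).
Proof.
rewrite /walk_vertex /=; case oj: (odd j).
  by right; rewrite walk_odd_step.
by left; rewrite walk_even_step ?oj.
Qed.

Definition lift_set : {set ('I_L2 * 'I_m) * ('I_L2 * 'I_n)} :=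
  [set lifted_edge z L2_gt0 M (e i) a | i : 'I_k, a : 'I_L2].

Lemma walk_in_lift a j : walk a j \in lift_set.
Proof. exact: imset2_f. Qed.

Lemma card_lift_set : #|lift_set| <= k * L2.
Proof.
have -> : lift_set =
    [set (fun p : 'I_k * 'I_L2 => lifted_edge z L2_gt0 M (e p.1) p.2) p | p in predT].
  apply/setP => x; apply/imset2P/imsetP => [[i a _ _ ->]|[[i a] _ ->]].
    by exists (i, a).
  by exists i a.
by rewrite (leq_trans (leq_imset_card _ _)) // (leq_trans (max_card _)) // card_prod !card_ord.
Qed.

Definition walk_block (a : 'I_tau) : {set ('I_L2 * 'I_m) * ('I_L2 * 'I_n)} :=
  [set walk a j | j : 'I_len].

Lemma walk_cycle (a : 'I_tau) : is_cycle lift_set (fun j : 'I_len => walk a j).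
Proof.
split; first exact: len_gt1.
split.
  by move=> j1 j2 /(walk_inj (ltn_ord a) (ltn_ord a) (ltn_ord j1) (ltn_ord j2)) [_ /val_inj].
exists (fun j : 'I_len => walk_vertex a j); split.
  by move=> j1 j2 /(walk_vertex_inj (ltn_ord a) (ltn_ord j1) (ltn_ord j2)) /val_inj.
move=> j; split; first exact: walk_in_lift.
split; first exact: walk_vertex_here.
rewrite /= /walk_vertex walk_mod_len odd_mod_len -/(walk_vertex a j.+1).
exact: walk_vertex_next.
Qed.

Lemma card_walk_block (a : 'I_tau) : #|walk_block a| = len.
Proof.
rewrite card_imset ?card_ord //.
by move=> j1 j2 /(walk_inj (ltn_ord a) (ltn_ord a) (ltn_ord j1) (ltn_ord j2)) [_ /val_inj].
Qed.

Definition walk_blocks := [set walk_block a | a in 'I_tau].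

Lemma walk_blocks_partition :
  partition walk_blocks (cover walk_blocks) /\ {in 'I_tau &, injective walk_block}.
Proof.
apply: indexed_partition => [a a' _ _ a'a|a _].
  rewrite disjoint_subset; apply/subsetP => x /imsetP [j1 _ ->].
  rewrite inE; apply/imsetP => -[j2 _ /(walk_inj (ltn_ord a) (ltn_ord a') (ltn_ord j1) (ltn_ord j2))].
  by move=> [/val_inj aa' _]; rewrite aa' eqxx in a'a.
by apply/set0Pn; exists (walk a (Ordinal len_gt1)); apply: imset_f.
Qed.

(* Counting: the walks use tau * len = L2 k edges, hence every lifted edge. *)
Lemma cover_walk_blocks : cover walk_blocks = lift_set.
Proof.
have [hpart hinj] := walk_blocks_partition.
apply/eqP; rewrite eqEcard; apply/andP; split.
  by apply/subsetP => x /bigcupP [B /imsetP [a _ ->]] /imsetP [j _ ->]; apply: walk_in_lift.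
rewrite (card_partition hpart) (eq_bigr (fun=> len)); last first.
  by move=> A /imsetP [a _ ->]; apply: card_walk_block.
rewrite sum_nat_const card_in_imset // card_ord (leq_trans card_lift_set) //.
by rewrite /len /turns mulnA [tau * _]mulnC divnK ?tau_dvdL // mulnC.
Qed.

Lemma lift_set_cycles : disjoint_union_of_cycles lift_set tau len.
Proof.
have [hpart hinj] := walk_blocks_partition.
exists walk_blocks; split; first by rewrite -cover_walk_blocks.
split; first by rewrite card_in_imset // card_ord.
split.
  by move=> B /imsetP [a _ ->]; exists (fun j : 'I_len => walk a j); split => //; apply: walk_cycle.
move=> B1 B2 /imsetP [a _ ->] /imsetP [a' _ ->] hne x y /imsetP [j _ ->] /imsetP [j' _ ->].
have aa' : a != a' by apply: contraNneq hne => ->.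
split; apply/negP => /eqP h; move: aa'; rewrite -val_eqE /=.
  by rewrite (walk_row_block (ltn_ord a) (ltn_ord a') h) eqxx.
by rewrite (walk_col_block (ltn_ord a) (ltn_ord a') h) eqxx.
Qed.

End LiftedWalk.

Lemma lifted_edge_in_HMD (m n z L2 : nat) (L2_gt0 : 0 < L2) (H : 'M[bool]_(m, n))
    (M : nat -> nat -> nat) (x : 'I_m * 'I_n) (a : 'I_L2) :
  x \in tanner (fun r c => H r c) ->
  lifted_edge z L2_gt0 M x a \in tanner (@HMD m n z L2 H M).
Proof.
by rewrite !inE /HMD /= => ->; rewrite modn_mod -surjective_pairing /=.
Qed.

Theorem theorem2
  (z mb nb : nat) (hz : 0 < z) (H : 'M[bool]_(mb * z, nb * z))
  (hcirc : @circulant_blocks (mb * z) (nb * z) z H)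
  (L2 d : nat) (hd : 1 <= d) (hdL : d <= L2)
  (M : nat -> nat -> nat) (hM : forall i j, M i j < d)
  (k : nat) (e : 'I_k -> 'I_(mb * z) * 'I_(nb * z))
  (hcyc : is_cycle (tanner (fun r c => H r c)) e)
  (hlab : forall i : 'I_k,
      if odd i then (e i).2 = (e (ordS i)).2 else (e i).1 = (e (ordS i)).1) :
  let S := [set @lifted_edge (mb * z) (nb * z) z L2 (leq_trans hd hdL) M (e i) a | i : 'I_k, a : 'I_L2] in
  let tau := gcdn L2 (@Delta (mb * z) (nb * z) z L2 k M e) in
  S \subset tanner (@HMD (mb * z) (nb * z) z L2 H M) /\
  disjoint_union_of_cycles S tau (L2 * k %/ tau).
Proof.
move=> S t.
have [k_gt1 [e_inj [v [v_inj e_v]]]] := hcyc.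
have e_inc i : incident (e i) (v i) /\ incident (e i) (v (ordS i)) by have [] := e_v i.
have k_even := cycle_length_even k_gt1 e_inj v_inj e_inc hlab.
split.
  apply/subsetP => x /imset2P [i a _ _ ->].
  by apply: lifted_edge_in_HMD; have [] := e_v i.
rewrite /t len_eq.
exact: (lift_set_cycles z (leq_trans hd hdL) M k_gt1 k_even e_inj hlab
  (shared_row k_gt1 e_inj v_inj e_inc hlab) (shared_col k_gt1 e_inj v_inj e_inc hlab)).
Qed.
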